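(* Let $\mathcal T$ be a triangulation of $S_g$ with vertex set $V$ and $d$ a hyperbolic cone-metric on $S_g$ with $V(d)\subseteq V$ realizing $\mathcal T$. For $t\in[1,+\infty)$ let $d_t$ be the hyperbolic cone-metric realizing $\mathcal T$ with edge lengths $l_e(d_t)=t\cdot l_e(d)$ for every edge $e$ of $\mathcal T$. Then, for every $v\in V$, the total angle $\lambda_v(d_t)$ is strictly decreasing in $t$.
   Context: $S_g$ is a closed oriented surface. A triangulation $\mathcal T$ with vertex set $V$ is an isotopy class relative to $V$ of topological triangulations with vertices $V$ (loops and multiple edges allowed). A hyperbolic cone-metric is locally hyperbolic except at finitely many conical points $V(d)$; it realizes $\mathcal T$ if some representative has geodesic edges. A metric realizing $\mathcal T$ is determined by its edge lengths, and any assignment of positive edge lengths satisfying the strict triangle inequalities in every triangle of $\mathcal T$ defines such a metric (by gluing hyperbolic triangles). $\lambda_v(d)$ denotes the total angle at $v$. *)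

From HB Require Import structures.
From mathcomp Require Import all_boot all_order all_algebra.
From mathcomp Require Import all_classical all_reals all_analysis.
Set Implicit Arguments. Unset Strict Implicit. Unset Printing Implicit Defensive.
Import Order.TTheory GRing.Theory Num.Theory.
Local Open Scope ring_scope.

(* Combinatorial data of a triangulation T of a closed surface with vertex *)
(* set V (loops and multiple edges allowed).  A triangulation is given by   *)
(* its finitely many triangles; triangle f has corners 0,1,2 at vertices    *)
(* tvert f i, and side i (the side opposite corner i) is the edge           *)
(* tedge f i.  Every edge is a side of exactly two triangle-sides (closed   *)
(* surface), the two sides glued along an edge have the same endpoints, and *)
(* every vertex of V is a corner of some triangle.                          *)

Definition nxt (i : 'I_3) : 'I_3 := inZp i.+1.
Definition prv (i : 'I_3) : 'I_3 := inZp i.+2.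

Record triangulation := Triangulation {
  tV : finType;
  tE : finType;
  tF : finType;
  tedge : tF -> 'I_3 -> tE;         (* side opposite corner i *)
  tvert : tF -> 'I_3 -> tV;
  tedge_two_sides : forall e : tE,
    #|[set p : tF * 'I_3 | tedge p.1 p.2 == e]| = 2;
  tedge_ends : forall (f g : tF) (i j : 'I_3), tedge f i = tedge g j ->
    perm_eq [:: tvert f (nxt i); tvert f (prv i)]
            [:: tvert g (nxt j); tvert g (prv j)];
  tvert_covered : forall v : tV, exists f i, tvert f i = v
}.

Definition cosh {R : realType} (x : R) : R := (expR x + expR (- x)) / 2.
Definition sinh {R : realType} (x : R) : R := (expR x - expR (- x)) / 2.

(* A hyperbolic cone-metric realizing T is given by its edge lengths:      *)
(* positive and satisfying the strict triangle inequalities in every       *)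
(* triangle of T.                                                          *)
Definition realizing_lengths {R : realType} (T : triangulation)
    (l : tE T -> R) : Prop :=
  (forall e, 0 < l e) /\
  (forall (f : tF T) (i : 'I_3),
     l (tedge f i) < l (tedge f (nxt i)) + l (tedge f (prv i))).

(* Angle of a hyperbolic triangle with side lengths a (opposite), b, c,    *)
(* by the hyperbolic law of cosines.                                       *)
Definition hyp_angle {R : realType} (a b c : R) : R :=
  acos ((cosh b * cosh c - cosh a) / (sinh b * sinh c)).

Definition corner_angle {R : realType} (T : triangulation) (l : tE T -> R)
    (f : tF T) (i : 'I_3) : R :=
  hyp_angle (l (tedge f i)) (l (tedge f (nxt i))) (l (tedge f (prv i))).

Definition total_angle {R : realType} (T : triangulation) (l : tE T -> R)
    (v : tV T) : R :=
  \sum_(p : tF T * 'I_3 | tvert p.1 p.2 == v) corner_angle l p.1 p.2.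

From HB Require Import structures.
From mathcomp Require Import all_boot all_order all_algebra.
From mathcomp Require Import all_classical all_reals all_analysis.
From mathcomp Require Import ring lra.
Set Implicit Arguments. Unset Strict Implicit. Unset Printing Implicit Defensive.
Import Order.TTheory GRing.Theory Num.Theory.
Local Open Scope ring_scope.

(* The strict triangle inequalities let one write the sides of a triangle as
   a = p + q, b = q + r, c = p + r with p, q, r > 0.  In these coordinates the
   hyperbolic law of cosines becomes
     cos alpha = 1 - 2 (sinh q / sinh (q + r)) (sinh p / sinh (p + r)),
   and since x |-> sinh (lam x) / sinh x is strictly decreasing on (0, +oo) for
   0 < lam < 1, both ratios decrease when all lengths are multiplied by a
   factor t > 1.  So every corner angle strictly decreases with t, and so does
   their sum at a vertex, which has at least one corner. *)

Section HyperbolicTriangle.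
Variable R : realType.

Lemma sinh0 : sinh (0 : R) = 0.
Proof. by rewrite /sinh oppr0 subrr mul0r. Qed.

Lemma sinh_gt0 (x : R) : 0 < x -> 0 < sinh x.
Proof.
move=> x0; rewrite /sinh divr_gt0 // subr_gt0 ltr_expR.
by rewrite -subr_gt0 opprK -mulr2n mulrn_wgt0.
Qed.

Lemma is_derive_sinhM (k x : R) :
  is_derive x 1 (fun y => sinh (k * y)) (k * cosh (k * x)).
Proof.
have -> : (fun y => sinh (k * y)) =
    (2^-1 : R) \*: ((fun y => expR (k * y)) - (fun y => expR (- k * y))).
  by apply/funext => y; rewrite /sinh /GRing.scale_fun /GRing.scale /= !fctE mulNr mulrC.
apply: is_derive_eq.
by rewrite /cosh /GRing.scale /= mulNr; field.
Qed.

Lemma is_derive_coshM (k x : R) :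
  is_derive x 1 (fun y => cosh (k * y)) (k * sinh (k * x)).
Proof.
have -> : (fun y => cosh (k * y)) =
    (2^-1 : R) \*: ((fun y => expR (k * y)) + (fun y => expR (- k * y))).
  by apply/funext => y; rewrite /cosh /GRing.scale_fun /GRing.scale /= !fctE mulNr mulrC.
apply: is_derive_eq.
by rewrite /sinh /GRing.scale /= !mulNr; field.
Qed.

Local Existing Instances is_derive_sinhM is_derive_coshM.

Lemma is_derive_gt0_lt (f df : R -> R) (a b : R) : a < b ->
  (forall x, a <= x <= b -> is_derive x 1 f (df x)) ->
  (forall x, a < x < b -> 0 < df x) -> f a < f b.
Proof.
move=> ab fdf df_gt0.
have dab x : x \in `[a, b] -> is_derive x 1 f (df x) by rewrite in_itv; apply: fdf.
apply: (@gtr0_derive1_lt_cc R f a b) => //.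
- by move=> x /subset_itv_oo_cc /dab [].
- move=> x /[dup] xab /subset_itv_oo_cc /dab [_ dfx].
  by rewrite derive1E dfx; apply: df_gt0; move: xab; rewrite in_itv.
- by apply: derivable_within_continuous => x /dab [].
- by rewrite in_itv /= lexx ltW.
- by rewrite in_itv /= lexx ltW.
Qed.

Lemma is_derive_lt0_gt (f df : R -> R) (a b : R) : a < b ->
  (forall x, a <= x <= b -> is_derive x 1 f (df x)) ->
  (forall x, a < x < b -> df x < 0) -> f b < f a.
Proof.
move=> ab fdf df_lt0; rewrite -ltrN2.
apply: (@is_derive_gt0_lt (- f) (fun x => - df x)) => // x xab.
- exact: is_deriveN (fdf x xab).
- by rewrite oppr_gt0 df_lt0.
Qed.

Lemma cosh_sinh_scale_lt (lam x : R) : 0 < lam < 1 -> 0 < x ->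
  lam * cosh (lam * x) * sinh x < sinh (lam * x) * cosh x.
Proof.
move=> /andP[lam0 lam1] x0.
(* Writing [1 * y] lets the derivative instances for [sinh (k * y)] apply. *)
pose psi := (fun y => sinh (lam * y)) * (fun y => cosh (1 * y))
  - lam \*: ((fun y => cosh (lam * y)) * (fun y => sinh (1 * y))).
have psi' (y : R) : is_derive y 1 psi ((1 - lam ^+ 2) * sinh (lam * y) * sinh (1 * y)).
  by apply: is_derive_eq; rewrite /GRing.scale /=; ring.
have psiE (y : R) : psi y = sinh (lam * y) * cosh y - lam * cosh (lam * y) * sinh y.
  by rewrite /psi /GRing.scale_fun /GRing.scale /= !fctE !mul1r; congr (_ - _); apply: mulrA.
have psi0 : psi 0 = 0 by rewrite psiE mulr0 sinh0 !(mulr0, mul0r) subr0.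
rewrite -subr_gt0 -psiE -psi0.
apply: is_derive_gt0_lt x0 (fun y _ => psi' y) _ => y /andP[y0 _].
have lam2_lt1 : lam ^+ 2 < 1 by rewrite expr2 -[1]mulr1 ltr_pM // ltW.
rewrite mul1r; apply: mulr_gt0; [apply: mulr_gt0 |].
- by rewrite subr_gt0.
- exact/sinh_gt0/mulr_gt0.
- exact: sinh_gt0.
Qed.

Lemma sinh_ratio_decreasing (lam u w : R) : 0 < lam < 1 -> 0 < u -> u < w ->
  sinh (lam * w) / sinh w < sinh (lam * u) / sinh u.
Proof.
move=> lam01 u0 uw.
pose phi := (fun y => sinh (lam * y)) * (fun y => (sinh (1 * y))^-1).
pose dphi y := (lam * cosh (lam * y) * sinh y - sinh (lam * y) * cosh y) / sinh y ^+ 2.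
have phi' (y : R) : 0 < y -> is_derive y 1 phi (dphi y).
  move=> y0; have sy : sinh (1 * y) != 0 by rewrite mul1r gt_eqF // sinh_gt0.
  have dinv := @is_deriveV R (fun y => sinh (1 * y)) y _ 1 sy (is_derive_sinhM 1 y).
  rewrite /phi /dphi; apply: is_derive_eq.
  by rewrite /GRing.scale /= !mul1r; rewrite mul1r in sy; field.
suff : phi w < phi u by rewrite /phi !fctE !mul1r.
apply: (@is_derive_lt0_gt phi dphi) uw _ _ => [y /andP[uy _]|y /andP[uy _]].
  exact/phi'/(lt_le_trans u0).
have y0 : 0 < y := lt_trans u0 uy.
by rewrite /dphi pmulr_llt0 ?subr_lt0 ?cosh_sinh_scale_lt // invr_gt0 exprn_gt0 // sinh_gt0.
Qed.

Lemma sinh_ratio_scale_lt (q r s t : R) : 0 < q -> 0 < r -> 0 < s -> s < t ->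
  sinh (t * q) / sinh (t * (q + r)) < sinh (s * q) / sinh (s * (q + r)).
Proof.
move=> q0 r0 s0 st.
have qr0 : 0 < q + r by rewrite addr_gt0.
have lam01 : 0 < q / (q + r) < 1 by rewrite divr_gt0 //= ltr_pdivrMr // mul1r ltrDl.
have scaleE z : q / (q + r) * (z * (q + r)) = z * q by field; rewrite gt_eqF.
have st' : s * (q + r) < t * (q + r) by rewrite ltr_pM2r.
have := sinh_ratio_decreasing lam01 (mulr_gt0 s0 qr0) st'.
by rewrite !scaleE.
Qed.

Lemma cosh_law_tangent (p q r : R) :
  cosh (q + r) * cosh (p + r) - cosh (p + q) =
  sinh (q + r) * sinh (p + r) - 2 * sinh q * sinh p.
Proof.
rewrite /cosh /sinh !opprD !expRD !expRN.
have := expR_gt0 p; have := expR_gt0 q; have := expR_gt0 r.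
by move=> *; field; rewrite ?gt_eqF.
Qed.

Lemma cosh_law_tangent_addN1 (p q r : R) :
  cosh (q + r) * cosh (p + r) - cosh (p + q) + sinh (q + r) * sinh (p + r) =
  2 * sinh (p + q + r) * sinh r.
Proof.
rewrite /cosh /sinh !opprD !expRD !expRN.
have := expR_gt0 p; have := expR_gt0 q; have := expR_gt0 r.
by move=> *; field; rewrite ?gt_eqF.
Qed.

Definition tangent_cos (p q r : R) :=
  (cosh (q + r) * cosh (p + r) - cosh (p + q)) / (sinh (q + r) * sinh (p + r)).

Lemma tangent_cosE (p q r : R) : 0 < p -> 0 < q -> 0 < r ->
  tangent_cos p q r =
  1 - 2 * ((sinh q / sinh (q + r)) * (sinh p / sinh (p + r))).
Proof.
move=> p0 q0 r0.
have := sinh_gt0 (addr_gt0 q0 r0); have := sinh_gt0 (addr_gt0 p0 r0).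
by rewrite /tangent_cos cosh_law_tangent => *; field; rewrite !gt_eqF.
Qed.

Lemma tangent_cos_bounds (p q r : R) : 0 < p -> 0 < q -> 0 < r ->
  -1 < tangent_cos p q r < 1.
Proof.
move=> p0 q0 r0.
have sp := sinh_gt0 p0; have sq := sinh_gt0 q0; have sr := sinh_gt0 r0.
have spr := sinh_gt0 (addr_gt0 p0 r0); have sqr := sinh_gt0 (addr_gt0 q0 r0).
have spqr := sinh_gt0 (addr_gt0 (addr_gt0 p0 q0) r0).
apply/andP; split.
  have -> : tangent_cos p q r = 2 * sinh (p + q + r) * sinh r /
      (sinh (q + r) * sinh (p + r)) - 1.
    by rewrite -cosh_law_tangent_addN1 /tangent_cos; field; rewrite !gt_eqF.
  by rewrite -subr_gt0 opprK subrK divr_gt0 // mulr_gt0 // mulr_gt0.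
by rewrite tangent_cosE // gtrBl mulr_gt0 // mulr_gt0 // divr_gt0.
Qed.

Lemma acos_lt (x y : R) : -1 <= x -> x < y -> y <= 1 -> acos y < acos x.
Proof.
move=> x_geN1 xy y_le1.
have x11 : -1 <= x <= 1 by rewrite x_geN1 (le_trans (ltW xy)).
have y11 : -1 <= y <= 1 by rewrite y_le1 andbT (le_trans x_geN1 (ltW xy)).
have acos_pi (z : R) : -1 <= z <= 1 -> acos z \in `[0, pi].
  by move=> z11; rewrite in_itv /= acos_ge0 // acos_lepi.
by rewrite -(ltr_cos (acos_pi _ y11) (acos_pi _ x11)) !acosK // in_itv.
Qed.

Lemma hyp_angle_tangent_scale_lt (p q r s t : R) :
  0 < p -> 0 < q -> 0 < r -> 0 < s -> s < t ->
  hyp_angle (t * (p + q)) (t * (q + r)) (t * (p + r)) <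
  hyp_angle (s * (p + q)) (s * (q + r)) (s * (p + r)).
Proof.
move=> p0 q0 r0 s0 st; have t0 := lt_trans s0 st.
have sp := mulr_gt0 s0 p0; have sq := mulr_gt0 s0 q0; have sr := mulr_gt0 s0 r0.
have tp := mulr_gt0 t0 p0; have tq := mulr_gt0 t0 q0; have tr := mulr_gt0 t0 r0.
rewrite /hyp_angle !mulrDr -!/(tangent_cos _ _ _).
apply: acos_lt; first by case/andP: (tangent_cos_bounds sp sq sr) => /ltW.
  rewrite !tangent_cosE // -!mulrDr ltrD2l ltrN2 ltr_pM2l //.
  have ratio_ge0 x y : 0 < x -> 0 < y -> 0 <= sinh (t * x) / sinh (t * (x + y)).
    move=> x0 y0; apply/ltW/divr_gt0; apply: sinh_gt0; first exact: mulr_gt0.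
    by rewrite mulr_gt0 ?addr_gt0.
  by apply: ltr_pM; rewrite ?ratio_ge0 ?sinh_ratio_scale_lt.
by case/andP: (tangent_cos_bounds tp tq tr) => _ /ltW.
Qed.

Lemma hyp_angle_scale_lt (a b c s t : R) : 0 < s -> s < t ->
  a < b + c -> b < c + a -> c < a + b ->
  hyp_angle (t * a) (t * b) (t * c) < hyp_angle (s * a) (s * b) (s * c).
Proof.
move=> s0 st hab hbc hca.
have p0 : 0 < (a - b + c) / 2 by rewrite divr_gt0 //; lra.
have q0 : 0 < (a + b - c) / 2 by rewrite divr_gt0 //; lra.
have r0 : 0 < (b + c - a) / 2 by rewrite divr_gt0 //; lra.
have := hyp_angle_tangent_scale_lt p0 q0 r0 s0 st.
have -> : (a - b + c) / 2 + (a + b - c) / 2 = a by field.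
have -> : (a + b - c) / 2 + (b + c - a) / 2 = b by field.
by have -> : (a - b + c) / 2 + (b + c - a) / 2 = c by field.
Qed.

End HyperbolicTriangle.

Lemma nxt_nxt (i : 'I_3) : nxt (nxt i) = prv i.
Proof. by case: i => [[|[|[|//]]] Hi]; apply: val_inj. Qed.

Lemma prv_nxt (i : 'I_3) : prv (nxt i) = i.
Proof. by case: i => [[|[|[|//]]] Hi]; apply: val_inj. Qed.

Lemma nxt_prv (i : 'I_3) : nxt (prv i) = i.
Proof. by case: i => [[|[|[|//]]] Hi]; apply: val_inj. Qed.

Lemma prv_prv (i : 'I_3) : prv (prv i) = nxt i.
Proof. by case: i => [[|[|[|//]]] Hi]; apply: val_inj. Qed.

Lemma corner_angle_scale_lt (R : realType) (T : triangulation) (l : tE T -> R)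
    (f : tF T) (i : 'I_3) (s t : R) :
  realizing_lengths l -> 0 < s -> s < t ->
  corner_angle (fun e => t * l e) f i < corner_angle (fun e => s * l e) f i.
Proof.
move=> [_ ltri] s0 st; apply: hyp_angle_scale_lt => //.
- by have := ltri f (nxt i); rewrite nxt_nxt prv_nxt.
- by have := ltri f (prv i); rewrite nxt_prv prv_prv addrC.
Qed.

Theorem lemma2p3p9 (R : realType) (T : triangulation) (l : tE T -> R)
  (hl : realizing_lengths l) (v : tV T) (s t : R) :
  1 <= s -> s < t ->
  total_angle (fun e => t * l e) v < total_angle (fun e => s * l e) v.
Proof.
move=> s1 st; have s0 : 0 < s := lt_le_trans ltr01 s1.
apply: ltr_sum => [|[f i] _]; last exact: corner_angle_scale_lt.
have [f [i fi]] := tvert_covered v.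
by apply/hasP; exists (f, i); rewrite ?mem_index_enum //= fi.
Qed.
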